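(* Let $R$ be a $*$-ring. Then the following are equivalent: (1) $R$ is strongly $J$-$*$-clean. (2) $R$ is uniquely clean and $R$ is strongly $*$-clean. (3) $R$ is uniquely strongly $*$-clean. (4) $R$ is uniquely $J$-$*$-clean. (5) For any $a\in R$, there exists a unique idempotent $e\in R$ such that $a-e\in U(R)$, $ae=ea$, $ae^*=e^*a$ and $e-e^*\in J(R)$.
   Context: All rings are associative with identity. A $*$-ring is a ring $R$ with an involution $*$, i.e. a map $a\mapsto a^*$ with $(a+b)^*=a^*+b^*$, $(ab)^*=b^*a^*$, $(a^* )^*=a$. $U(R)$ denotes the group of units and $J(R)$ the Jacobson radical of $R$. A projection is an element $e$ with $e^2=e=e^*$. $R$ is strongly $J$-$*$-clean if every $a\in R$ can be written $a=e+u$ with $e$ a projection, $u\in J(R)$ and $ae=ea$. $R$ is strongly $*$-clean if every $a\in R$ can be written $a=e+u$ with $e$ a projection, $u\in U(R)$ and $eu=ue$. $R$ is uniquely clean if every element of $R$ can be written uniquely as the sum of an idempotent and a unit. $R$ is uniquely strongly $*$-clean if for every $a\in R$ there exists a unique projection $e\in R$ such that $a-e\in U(R)$ and $ae=ea$. $R$ is uniquely $J$-$*$-clean if for every $a\in R$ there exists a unique projection $e\in R$ such that $a-e\in J(R)$. *)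

From HB Require Import structures.
From mathcomp Require Import all_boot all_algebra.
Set Implicit Arguments. Unset Strict Implicit. Unset Printing Implicit Defensive.
Import GRing.Theory.
Local Open Scope ring_scope.

(* Rings are associative with identity; we allow any pzRingType
   (possibly the zero ring), and define units as two-sided invertible. *)
Section StarRing.
Variable R : pzRingType.

Definition is_unit (a : R) : Prop := exists b : R, a * b = 1 /\ b * a = 1.

Definition is_involution (star : R -> R) : Prop :=
  [/\ forall a b, star (a + b) = star a + star b,
      forall a b, star (a * b) = star b * star a &
      forall a, star (star a) = a].

Definition left_ideal (L : R -> Prop) : Prop :=
  [/\ L 0, (forall x y, L x -> L y -> L (x - y)) &
      (forall r x, L x -> L (r * x))].

Definition maximal_left_ideal (L : R -> Prop) : Prop :=
  [/\ left_ideal L, ~ L 1 &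
      forall M : R -> Prop, left_ideal M -> ~ M 1 ->
        (forall x, L x -> M x) -> forall x, M x -> L x].

Definition in_jacobson (a : R) : Prop :=
  forall L : R -> Prop, maximal_left_ideal L -> L a.

Definition idempotent (e : R) : Prop := e * e = e.

Definition projection (star : R -> R) (e : R) : Prop := e * e = e /\ star e = e.

Definition strongly_J_star_clean (star : R -> R) : Prop :=
  forall a : R, exists e : R,
    [/\ projection star e, in_jacobson (a - e) & a * e = e * a].

Definition strongly_star_clean (star : R -> R) : Prop :=
  forall a : R, exists e : R, exists u : R,
    [/\ a = e + u, projection star e, is_unit u & e * u = u * e].

Definition uniquely_clean : Prop :=
  forall a : R, exists e : R, exists u : R,
    [/\ a = e + u, idempotent e, is_unit u &
        forall e' u' : R, a = e' + u' -> idempotent e' -> is_unit u' ->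
          e' = e /\ u' = u].

Definition uniquely_strongly_star_clean (star : R -> R) : Prop :=
  forall a : R, exists! e : R,
    [/\ projection star e, is_unit (a - e) & a * e = e * a].

Definition uniquely_J_star_clean (star : R -> R) : Prop :=
  forall a : R, exists! e : R, projection star e /\ in_jacobson (a - e).

Definition condition5 (star : R -> R) : Prop :=
  forall a : R, exists! e : R,
    [/\ idempotent e, is_unit (a - e), a * e = e * a,
        a * star e = star e * a & in_jacobson (e - star e)].

End StarRing.

From HB Require Import structures.
From mathcomp Require Import all_boot all_algebra.
From mathcomp Require Import boolp classical_sets.
Set Implicit Arguments. Unset Strict Implicit. Unset Printing Implicit Defensive.
Import GRing.Theory.
Local Open Scope ring_scope.

(* Under each of the five conditions every idempotent of R is a self-adjoint
   (hence, by a corner argument, central) projection.  In a uniquely clean ring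
   the units are exactly 1 + J(R) and 2 is in J(R), so a = e + u with e a
   projection yields a - (1 - e) in J(R); conversely if a - e is in J(R) then
   a - (1 - e) = (2e - 1) + (a - e) is a unit, and 1 - e is the only idempotent
   with that property.  The hard direction starts from uniqueness of the
   projection modulo J(R): it makes R/J(R) Boolean, so all commutators lie in
   J(R); for a projection e, x = e r (1 - e) is then in J(R), and the projection
   onto (e + x)R agrees with e modulo J(R), hence equals e, which forces x = 0
   and makes e central. *)

Lemma subrBB (V : zmodType) (x y z : V) : (x - y) - (x - z) = z - y.
Proof. by rewrite opprB addrC addrA subrK. Qed.

Section Units.
Variable R : pzRingType.

Lemma unitM (u v : R) : is_unit u -> is_unit v -> is_unit (u * v).
Proof.
move=> [u' [uu' u'u]] [v' [vv' v'v]]; exists (v' * u'); split.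
  by rewrite mulrA -(mulrA u) vv' mulr1.
by rewrite mulrA -(mulrA v') u'u mulr1.
Qed.

Lemma unit_involutive (y : R) : y * y = 1 -> is_unit y.
Proof. by move=> yy; exists y. Qed.

Lemma unit_1Dnil (x : R) : x * x = 0 -> is_unit (1 + x).
Proof.
move=> xx; exists (1 - x); split.
  by rewrite mulrBr mulr1 mulrDl mul1r xx addr0 addrK.
by rewrite mulrDr mulr1 mulrBl mul1r xx subr0 subrK.
Qed.

Lemma unit_1subrC (a b : R) : is_unit (1 - b * a) -> is_unit (1 - a * b).
Proof.
move=> [v [h1 h2]]; exists (1 + a * v * b); split.
  have E : (1 - a * b) * a = a * (1 - b * a) by rewrite mulrBl mulrBr mul1r mulr1 mulrA.
  by rewrite mulrDr mulr1 !mulrA E -(mulrA a) h1 mulr1 subrK.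
have E : b * (1 - a * b) = (1 - b * a) * b by rewrite mulrBl mulrBr mul1r mulr1 mulrA.
by rewrite mulrDl mul1r -!mulrA E (mulrA v) h2 mul1r subrK.
Qed.

Lemma unit_mulIr (u x : R) : is_unit u -> x * u = 0 -> x = 0.
Proof. by move=> [w [uw _]] xu; rewrite -[x]mulr1 -uw mulrA xu mul0r. Qed.

End Units.

Section Radical.
Variable R : pzRingType.
Implicit Types (L : R -> Prop) (a j r u x y : R).

Local Notation J := (@in_jacobson R).

Lemma left_idealN L x : left_ideal L -> L x -> L (- x).
Proof. by move=> [L0 LB _] Lx; rewrite -sub0r; apply: LB. Qed.

Lemma left_idealD L x y : left_ideal L -> L x -> L y -> L (x + y).
Proof.
move=> HL Lx Ly; rewrite -[y]opprK.
by case: HL (left_idealN HL Ly) => _ LB _; apply: LB.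
Qed.

Lemma exists_maximal_left_ideal L : left_ideal L -> ~ L 1 ->
  exists M, maximal_left_ideal M /\ forall x, L x -> M x.
Proof.
move=> HL nL1.
pose Q (X : set R) := [/\ left_ideal X, ~ X 1 & forall x, L x -> X x].
have QL : Q L by [].
(* the empty set is admitted so that the empty chain has an upper bound *)
pose P (X : set R) := X = set0 \/ Q X.
have [|A [PA Amax]] := @Zorn_bigcup R P.
  move=> F FP Ftot.
  have QF X z : F X -> X z -> Q X.
    by move=> FX Xz; case: (FP X FX) => // X0; rewrite X0 in Xz.
  case: (pselect (exists X, F X /\ Q X)) => [[X0 [FX0 QX0]]|noQ]; last first.
    left; apply/seteqP; split=> // z [X FX Xz].
    by apply: noQ; exists X; split=> //; apply: QF Xz.
  right; split.
  - split.
    + by exists X0 => //; case: QX0 => [[]].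
    + move=> x y [X1 FX1 X1x] [X2 FX2 X2y].
      case: (Ftot X1 X2 FX1 FX2) => sub.
        exists X2 => //; case: (QF X2 y FX2 X2y) => [[_ LB _] _ _].
        by apply: LB => //; apply: sub.
      exists X1 => //; case: (QF X1 x FX1 X1x) => [[_ LB _] _ _].
      by apply: LB => //; apply: sub.
    + move=> r x [X1 FX1 X1x]; exists X1 => //.
      by case: (QF X1 x FX1 X1x) => [[_ _ LM] _ _]; apply: LM.
  - by move=> [X1 FX1 X1x]; case: (QF X1 1 FX1 X1x).
  - by move=> x Lx; exists X0 => //; case: QX0 => _ _; apply.
case: PA => [A0|[HA nA1 LA]].
  have [] := Amax L; last by right.
  rewrite A0; split; first by move=> x.
  by move=> L0; case: HL => /L0.
exists A; split=> //; split=> // M HM nM1 AM x Mx.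
apply/not_notP => nAx; apply: (Amax M); last by right; split=> // y /LA /AM.
by split=> // AM'; apply: nAx; apply: AM'.
Qed.

Lemma jacobson0 : J 0.
Proof. by move=> L [[]]. Qed.

Lemma jacobsonB x y : J x -> J y -> J (x - y).
Proof. by move=> Jx Jy L ML; case: (ML) => [[_ LB _] _ _]; apply: LB; [apply: Jx|apply: Jy]. Qed.

Lemma jacobsonN x : J x -> J (- x).
Proof. by move=> Jx; rewrite -sub0r; apply: jacobsonB => //; apply: jacobson0. Qed.

Lemma jacobsonD x y : J x -> J y -> J (x + y).
Proof. by move=> Jx Jy; rewrite -[y]opprK; apply: jacobsonB => //; apply: jacobsonN. Qed.

Lemma jacobsonMl r x : J x -> J (r * x).
Proof. by move=> Jx L ML; case: (ML) => [[_ _ LM] _ _]; apply: LM; apply: Jx. Qed.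

Lemma jacobson_left_inv j : J j -> exists b, b * (1 - j) = 1.
Proof.
move=> Jj; apply/not_notP => nb.
pose I z := exists s, z = s * (1 - j).
have HI : left_ideal I.
  split; first by exists 0; rewrite mul0r.
    by move=> _ _ [s1 ->] [s2 ->]; exists (s1 - s2); rewrite mulrBl.
  by move=> r _ [s ->]; exists (r * s); rewrite mulrA.
have nI1 : ~ I 1 by move=> [s e]; apply: nb; exists s.
have [L [ML IL]] := exists_maximal_left_ideal HI nI1.
have L1j : L (1 - j) by apply: IL; exists 1; rewrite mul1r.
case: (ML) => HL nL1 _; apply: nL1; rewrite -(subrK j 1).
by apply: left_idealD => //; apply: Jj.
Qed.

Lemma jacobson_unit1B j : J j -> is_unit (1 - j).
Proof.
move=> Jj; have [b bj] := jacobson_left_inv Jj.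
have b_1B : b = 1 - - (b * j) by rewrite opprK -{1}bj mulrBr mulr1 subrK.
have [c cb] : exists c, c * b = 1.
  by rewrite b_1B; apply: jacobson_left_inv; apply: jacobsonN; apply: jacobsonMl.
have c_1B : c = 1 - j by rewrite -[c]mulr1 -{1}bj mulrA cb mul1r.
by exists b; split=> //; rewrite -c_1B.
Qed.

Lemma jacobson_unit1D j : J j -> is_unit (1 + j).
Proof. by move=> Jj; rewrite -[j]opprK; apply: jacobson_unit1B; apply: jacobsonN. Qed.

Lemma jacobson_unitB u j : is_unit u -> J j -> is_unit (u - j).
Proof.
move=> Uu Jj; case: (Uu) => [v [uv vu]].
have -> : u - j = u * (1 - v * j) by rewrite mulrBr mulr1 mulrA uv mul1r.
by apply: unitM => //; apply: jacobson_unit1B; apply: jacobsonMl.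
Qed.

Lemma jacobson_unitD u j : is_unit u -> J j -> is_unit (u + j).
Proof. by move=> Uu Jj; rewrite -[j]opprK; apply: jacobson_unitB => //; apply: jacobsonN. Qed.

Lemma jacobson_of_units a : (forall r, is_unit (1 - r * a)) -> J a.
Proof.
move=> U L [[L0 LB LM] nL1 Lmax]; apply/not_notP => nLa.
pose M z := exists l s, L l /\ z = l + s * a.
have HM : left_ideal M.
  split; first by exists 0, 0; rewrite mul0r addr0.
    move=> _ _ [l1 [s1 [Ll1 ->]]] [l2 [s2 [Ll2 ->]]].
    exists (l1 - l2), (s1 - s2); split; first exact: LB.
    by rewrite mulrBl opprD addrACA.
  move=> r _ [l [s [Ll ->]]]; exists (r * l), (r * s); split; first exact: LM.
  by rewrite mulrDr mulrA.
case: (pselect (M 1)) => [[l [s [Ll l_sa]]]|nM1].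
  have [v [_ vU]] := U s.
  have l_eq : l = 1 - s * a by rewrite l_sa addrK.
  by apply: nL1; rewrite -vU -l_eq; apply: LM.
apply: nLa; apply: (Lmax M HM nM1); first by move=> x Lx; exists x, 0; rewrite mul0r addr0.
by exists 0, 1; rewrite mul1r add0r.
Qed.

Lemma jacobsonMr x r : J x -> J (x * r).
Proof.
move=> Jx; apply: jacobson_of_units => s; rewrite mulrA; apply: unit_1subrC.
by rewrite mulrA; apply: jacobson_unit1B; apply: jacobsonMl.
Qed.

Lemma jacobson_idempotent_eq0 e : idempotent e -> J e -> e = 0.
Proof.
move=> ee Je; apply: (unit_mulIr (jacobson_unit1B Je)).
by rewrite mulrBr mulr1 ee subrr.
Qed.

(* Modulo [J(R)] every element is idempotent; then [2 = (-1)^2 - (-1)] and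
   [rs + sr] are in [J(R)], hence so is [rs - sr = (rs + sr) - 2sr]. *)
Lemma jacobson_commutator_of_boolean :
  (forall a, J (a * a - a)) -> forall r s, J (r * s - s * r).
Proof.
move=> boolJ r s.
have J2 : J (1 + 1) by have := boolJ (-1); rewrite mulrNN mulr1 opprK.
have Jrs_sr : J (r * s + s * r).
  have := jacobsonB (boolJ (r + s)) (jacobsonD (boolJ r) (boolJ s)).
  have -> : (r + s) * (r + s) - (r + s) = (r * s + s * r) + ((r * r - r) + (s * s - s)).
    rewrite mulrDl !mulrDr [s * r + _]addrC addrACA (addrAC (r * r + s * s)).
    by rewrite [RHS]addrC [in RHS](addrACA (r * r)) opprD.
  by rewrite addrK.
have -> : r * s - s * r = (r * s + s * r) - s * r * (1 + 1).
  by rewrite mulrDr mulr1 opprD addrA addrK.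
by apply: jacobsonB => //; apply: jacobsonMl.
Qed.

End Radical.

Section Idempotents.
Variable R : pzRingType.
Implicit Types (e f g a b r s t : R).

Local Notation J := (@in_jacobson R).

Definition idempotents_central := forall e r, idempotent e -> e * r = r * e.

Lemma idempotent1B e : idempotent e -> idempotent (1 - e).
Proof. by move=> ee; rewrite /idempotent mulrBr mulr1 mulrBl mul1r ee subrr subr0. Qed.

Lemma mul_idempotent1B e : idempotent e -> e * (1 - e) = 0.
Proof. by move=> ee; rewrite mulrBr mulr1 ee subrr. Qed.

Lemma mul1B_idempotent e : idempotent e -> (1 - e) * e = 0.
Proof. by move=> ee; rewrite mulrBl mul1r ee subrr. Qed.

Lemma unit_reflection e : idempotent e -> is_unit (e + e - 1).
Proof.
move=> ee; apply: unit_involutive.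
rewrite mulrBr mulr1 !mulrBl !mulrDr !mulrDl ee mul1r opprB.
by rewrite addrK addrC subrK.
Qed.

Lemma comm_idempotentM e f : idempotent e -> idempotent f -> e * f = f * e ->
  idempotent (e * f).
Proof. by move=> ee ff ef; rewrite /idempotent mulrA -(mulrA e f e) -ef mulrA ee -mulrA ff. Qed.

Lemma comm_idempotent_jacobson_eq e f : idempotent e -> idempotent f ->
  e * f = f * e -> J (e - f) -> e = f.
Proof.
suff absorb e' f' : idempotent e' -> idempotent f' -> e' * f' = f' * e' ->
    J (e' - f') -> e' = e' * f'.
  move=> ee ff ef Jef; rewrite (absorb e f) // ef -absorb //.
  by rewrite -opprB; apply: jacobsonN.
move=> ee ff ef Jef.
have ef1B : e' * (1 - f') = e' * (e' - f') by rewrite !mulrBr mulr1 ee.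
have : e' * (1 - f') = 0.
  apply: jacobson_idempotent_eq0; last by rewrite ef1B; apply: jacobsonMl.
  apply: comm_idempotentM => //; first exact: idempotent1B.
  by rewrite mulrBr mulrBl mulr1 mul1r ef.
by rewrite mulrBr mulr1 => /eqP; rewrite subr_eq0 => /eqP.
Qed.

Lemma comm_idempotent_unit_eq1B e f : idempotent e -> idempotent f ->
  e * f = f * e -> is_unit (e - f) -> e = 1 - f.
Proof.
move=> ee ff ef U.
have ef0 : e * f = 0.
  apply: (unit_mulIr U).
  by rewrite mulrBr -(mulrA e f e) -ef mulrA ee -mulrA ff subrr.
have e1B_f1B : (1 - e) * (1 - f) = 0.
  have f1B_ef : (1 - f) * (e - f) = e * (1 - f).
    by rewrite mulrBr mul1B_idempotent // subr0 mulrBl mul1r mulrBr mulr1 ef.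
  apply: (unit_mulIr U).
  by rewrite -mulrA f1B_ef mulrA mul1B_idempotent // mul0r.
move: e1B_f1B; rewrite mulrBl mul1r mulrBr mulr1 ef0 subr0 => /eqP.
by rewrite subr_eq0 => /eqP <-.
Qed.

Lemma comm_of_corners0 g r : g * r * (1 - g) = 0 -> (1 - g) * r * g = 0 ->
  g * r = r * g.
Proof.
move=> grg' g'rg.
have -> : g * r = g * r * g by rewrite -{1}[g * r]mulr1 -(subrK g 1) mulrDr grg' add0r.
have {2}-> : r = (1 - g) * r + g * r by rewrite mulrBl mul1r subrK.
by rewrite mulrDl g'rg add0r.
Qed.

Lemma idempotents_central_of_corners0 :
  (forall g r, idempotent g -> g * r * (1 - g) = 0) -> idempotents_central.
Proof.
move=> corner0 g r gg; apply: comm_of_corners0; first exact: corner0.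
by have := corner0 _ r (idempotent1B gg); rewrite subKr.
Qed.

Lemma corner_nilpotent g r : idempotent g ->
  let x := g * r * (1 - g) in
  [/\ g * x = x, x * g = 0, x * x = 0 & idempotent (g + x)].
Proof.
move=> gg x.
have gx : g * x = x by rewrite /x !mulrA gg.
have xg : x * g = 0 by rewrite /x -mulrA mul1B_idempotent // mulr0.
have xx : x * x = 0 by rewrite {2}/x mulrA mulrA xg !mul0r.
by split=> //; rewrite /idempotent mulrDl !mulrDr gg gx xg xx !addr0.
Qed.

Lemma dedekind_finite_of_idempotents_central s t :
  idempotents_central -> t * s = 1 -> s * t = 1.
Proof.
move=> central ts.
have st_idem : idempotent (s * t) by rewrite /idempotent mulrA -(mulrA s t s) ts mulr1.
have : t * (s * t) * s = 1 by rewrite mulrA ts mul1r ts.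
by rewrite -(central _ t st_idem) -mulrA ts mulr1.
Qed.

(* [a |-> 1 - f + f a] embeds the corner ring fRf multiplicatively into R. *)
Lemma corner_embedM f a b : (forall r, f * r = r * f) -> idempotent f ->
  (1 - f + f * a) * (1 - f + f * b) = 1 - f + f * (a * b).
Proof.
move=> fC ff.
have f'f := mul1B_idempotent ff; have ff' := mul_idempotent1B ff.
have f'f' := idempotent1B ff.
set f' := 1 - f in f'f ff' f'f' *; clearbody f'.
rewrite mulrDl !mulrDr f'f' (mulrA f' f b) f'f mul0r addr0.
rewrite (fC a) -(mulrA a f f') ff' mulr0 add0r.
by rewrite -(mulrA a f (f * b)) (mulrA f f b) ff (mulrA a f b) -(fC a) -mulrA.
Qed.

Lemma uniquely_clean_of_unique_idempotent :
  (forall a : R, exists e, [/\ idempotent e, is_unit (a - e) &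
     forall e', idempotent e' -> is_unit (a - e') -> e' = e]) ->
  uniquely_clean R.
Proof.
move=> uniq a; have [e [ee Ue e_uniq]] := uniq a.
exists e, (a - e); split=> //; first by rewrite addrC subrK.
move=> e' u' aE ee' Uu'.
have ae' : a - e' = u' by rewrite aE addrAC subrr add0r.
have e'e : e' = e by apply: e_uniq => //; rewrite ae'.
by rewrite -ae' e'e.
Qed.

End Idempotents.

Section UniquelyClean.
Variable R : pzRingType.
Hypothesis ucR : uniquely_clean R.
Implicit Types (e f g r u z : R).

Local Notation J := (@in_jacobson R).

Lemma uniquely_clean_idempotent_eq z e1 u1 e2 u2 :
  z = e1 + u1 -> idempotent e1 -> is_unit u1 ->
  z = e2 + u2 -> idempotent e2 -> is_unit u2 -> e1 = e2.
Proof.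
move=> z1 e1e1 U1 z2 e2e2 U2; have [e [u [_ _ _ uniq]]] := ucR z.
by rewrite (uniq e1 u1 z1 e1e1 U1).1 (uniq e2 u2 z2 e2e2 U2).1.
Qed.

(* [g + x = (1 - g) + (2g - 1)(1 + x) = (1 - (g + x)) + (2(g + x) - 1)] are two
   clean decompositions, so [g = g + x]. *)
Lemma uniquely_clean_idempotents_central : idempotents_central R.
Proof.
apply: idempotents_central_of_corners0 => g r gg.
have [gx _ xx gx_idem] := corner_nilpotent r gg.
set x := g * r * (1 - g) in gx xx gx_idem *.
have: 1 - g = 1 - (g + x).
  apply: (@uniquely_clean_idempotent_eq (g + x) _ ((g + g - 1) * (1 + x)) _
            ((g + x) + (g + x) - 1)).
  - rewrite mulrDr mulr1 mulrBl mulrDl mul1r gx addrK.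
    by rewrite addrA addrACA (addrC 1) addrACA addrK subrr addr0.
  - exact: idempotent1B.
  - by apply: unitM; [apply: unit_reflection | apply: unit_1Dnil].
  - by rewrite addrACA (addrC 1) addrACA addrK subrr addr0.
  - exact: idempotent1B.
  - exact: unit_reflection.
rewrite opprD addrA => /(congr1 (fun y => 1 - g - y)).
by rewrite subrr subKr => /esym.
Qed.

(* With [f] the idempotent part of [1 - r (u - 1)], the element
   [z = 1 - f + f (1 - u)] is a unit and so is [z - f]; uniqueness of the clean
   decomposition [z = 0 + z = f + (z - f)] forces [f = 0]. *)
Lemma uniquely_clean_unit_sub1 u : is_unit u -> J (u - 1).
Proof.
move=> Uu; have central := uniquely_clean_idempotents_central.
apply: jacobson_of_units => r.
have [f [v [rEfv ff Uv _]]] := ucR (1 - r * (u - 1)).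
suff f0 : f = 0 by rewrite rEfv f0 add0r.
have fC r' : f * r' = r' * f by apply: central.
have [v' [vv' v'v]] := Uv; have [u' [uu' u'u]] := Uu.
have fr1Bu : f * (r * (1 - u)) = f * v.
  have : f * (1 - r * (u - 1)) = f + f * v by rewrite rEfv mulrDr ff.
  by rewrite mulrDr mulr1 -mulrN opprB => /addrI.
have f_inv : f * (v' * r * (1 - u)) = f.
  by rewrite !mulrA (fC v') -!mulrA fr1Bu (fC v) mulrA v'v mul1r.
pose z := 1 - f + f * (1 - u).
have Uz : is_unit z.
  have wz : (1 - f + f * (v' * r)) * z = 1 by rewrite corner_embedM // f_inv subrK.
  by exists (1 - f + f * (v' * r)); split=> //; apply: dedekind_finite_of_idempotents_central.
have Uzf : is_unit (z - f).
  have -> : z - f = 1 - f + f * (- u).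
    by rewrite /z -addrA; congr (_ + _); rewrite mulrBr mulr1 addrAC subrr add0r mulrN.
  exists (1 - f + f * (- u')); rewrite !corner_embedM // !mulrNN uu' u'u mulr1.
  by rewrite subrK.
apply: esym; apply: (@uniquely_clean_idempotent_eq z _ z _ (z - f)) => //.
- by rewrite add0r.
- by rewrite /idempotent mul0r.
- by rewrite addrC subrK.
Qed.

End UniquelyClean.

Section Involution.
Variable R : pzRingType.
Variable star : R -> R.
Hypothesis starR : is_involution star.
Implicit Types (a e f g r u x y : R).

Local Notation J := (@in_jacobson R).

Lemma starD x y : star (x + y) = star x + star y. Proof. by case: starR. Qed.
Lemma starM x y : star (x * y) = star y * star x. Proof. by case: starR. Qed.
Lemma starK x : star (star x) = x. Proof. by case: starR. Qed.

Lemma star0 : star 0 = 0.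
Proof. by apply: (addrI (star 0)); rewrite -starD !addr0. Qed.

Lemma starN x : star (- x) = - star x.
Proof. by apply: (addrI (star x)); rewrite -starD !subrr star0. Qed.

Lemma starB x y : star (x - y) = star x - star y.
Proof. by rewrite starD starN. Qed.

Lemma star1 : star 1 = 1.
Proof. by rewrite -[star 1]mulr1 -{2}(starK 1) -starM mulr1 starK. Qed.

Lemma star_unit u : is_unit u -> is_unit (star u).
Proof. by move=> [w [uw wu]]; exists (star w); rewrite -!starM uw wu star1. Qed.

Lemma star_idempotent e : idempotent e -> idempotent (star e).
Proof. by rewrite /idempotent => ee; rewrite -starM ee. Qed.

Lemma jacobson_star a : J a -> J (star a).
Proof.
move=> Ja; apply: jacobson_of_units => r.
have U : is_unit (1 - a * star r) by apply: jacobson_unit1B; apply: jacobsonMr.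
by have := star_unit U; rewrite starB star1 starM starK.
Qed.

Lemma projection1B e : projection star e -> projection star (1 - e).
Proof. by move=> [ee se]; split; [apply: idempotent1B | rewrite starB star1 se]. Qed.

Definition idempotents_selfadjoint := forall e, idempotent e -> star e = e.

(* [g + g r (1 - g)] is idempotent, hence self-adjoint, so [x = g r (1 - g)] is
   self-adjoint too, and then [x = g x = g x^* = g (1 - g) r^* g = 0]. *)
Lemma idempotents_central_of_selfadjoint :
  idempotents_selfadjoint -> idempotents_central R.
Proof.
move=> sa; apply: idempotents_central_of_corners0 => g r gg.
have [gx _ _ gx_idem] := corner_nilpotent r gg.
set x := g * r * (1 - g) in gx gx_idem *.
have sx : star x = x by have := sa _ gx_idem; rewrite starD (sa _ gg) => /addrI.
rewrite -gx -sx /x !starM starB star1 (sa _ gg).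
by rewrite !mulrA mul_idempotent1B // !mul0r.
Qed.

(* The projection [p] onto the right ideal generated by the idempotent [e + x]:
   it only needs [1 + x x^*] to be invertible. *)
Lemma projection_of_corner e x w : projection star e -> e * x = x -> x * e = 0 ->
  (1 + x * star x) * w = 1 -> w * (1 + x * star x) = 1 ->
  let p := (e + star x) * w * (e + x) in
  projection star p /\ (e + x) * p = e + x.
Proof.
move=> [ee se] ex xe cw wc p.
set y := star x in cw wc p *; set c := 1 + x * y in cw wc.
have ey : e * y = 0 by rewrite /y -se -starM xe star0.
have sc : star c = c by rewrite /c starD star1 starM starK.
have exey : (e + x) * (e + y) = e * c.
  by rewrite mulrDl !mulrDr ee ey xe addr0 add0r mulr1 mulrA ex.
clearbody c.
have sw : star w = w.
  have swc : star w * c = 1 by rewrite -sc -starM cw star1.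
  by rewrite -[star w]mulr1 -cw mulrA swc mul1r.
have exp : (e + x) * p = e + x.
  by rewrite /p !mulrA exey -(mulrA e c w) cw mulr1 mulrDr ee ex.
split; last exact: exp.
split; last by rewrite /p !starM !starD se starK sw mulrA.
by rewrite {1}/p -!mulrA exp /p !mulrA.
Qed.

Lemma strongly_star_clean_of_selfadjoint :
  idempotents_selfadjoint -> uniquely_clean R -> strongly_star_clean star.
Proof.
move=> sa ucR a; have [e [u [aE ee Uu _]]] := ucR a.
exists e, u; split=> //; first by split=> //; apply: sa.
exact: idempotents_central_of_selfadjoint.
Qed.

Lemma strongly_J_star_clean_selfadjoint :
  strongly_J_star_clean star -> idempotents_selfadjoint.
Proof.
move=> sJ g gg; have [e [[ee se] Je ge]] := sJ g.
by rewrite (comm_idempotent_jacobson_eq gg ee ge Je).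
Qed.

Lemma strongly_J_star_clean_uniquely_strongly_star_clean :
  strongly_J_star_clean star -> uniquely_strongly_star_clean star.
Proof.
move=> sJ; have sa := strongly_J_star_clean_selfadjoint sJ.
have central := idempotents_central_of_selfadjoint sa.
move=> a; have [e [pe Je _]] := sJ a; have ee := pe.1.
exists (1 - e); split.
  split; first exact: projection1B.
  - have -> : a - (1 - e) = (e + e - 1) + (a - e).
      by rewrite [RHS]addrC -(addrA e e) subrKA opprB.
    exact: jacobson_unitD (unit_reflection ee) Je.
  - exact/esym/central/idempotent1B.
move=> f [[ff _] Uf _].
have Uef : is_unit (e - f).
  by rewrite -(subrBB a); apply: jacobson_unitB.
by rewrite (comm_idempotent_unit_eq1B ee ff (central _ _ ee) Uef) subKr.
Qed.

Lemma strongly_J_star_clean_uniquely_J_star_clean :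
  strongly_J_star_clean star -> uniquely_J_star_clean star.
Proof.
move=> sJ; have sa := strongly_J_star_clean_selfadjoint sJ.
have central := idempotents_central_of_selfadjoint sa.
move=> a; have [e [pe Je _]] := sJ a; have ee := pe.1.
exists e; split=> // f [[ff _] Jf].
apply: (comm_idempotent_jacobson_eq ee ff (central _ _ ee)).
by rewrite -(subrBB a); apply: jacobsonB.
Qed.

Lemma strongly_J_star_clean_condition5 :
  strongly_J_star_clean star -> condition5 star.
Proof.
move=> sJ; have sa := strongly_J_star_clean_selfadjoint sJ.
have usc := strongly_J_star_clean_uniquely_strongly_star_clean sJ.
move=> a; have [f [[[ff sf] Uf af] f_uniq]] := usc a.
exists f; split; first by split=> //; rewrite sf // subrr; apply: jacobson0.
by move=> e [ee Ue ae _ _]; apply: f_uniq; split=> //; split=> //; apply: sa.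
Qed.

Lemma uniquely_strongly_star_clean_uniquely_clean :
  uniquely_strongly_star_clean star -> uniquely_clean R /\ strongly_star_clean star.
Proof.
move=> usc.
have sa : idempotents_selfadjoint.
  move=> g gg; have [f [[[ff sf] Uf gf] _]] := usc g.
  by rewrite (comm_idempotent_unit_eq1B gg ff gf Uf) starB star1 sf.
have central := idempotents_central_of_selfadjoint sa.
suff ucR : uniquely_clean R by split=> //; apply: strongly_star_clean_of_selfadjoint.
apply: uniquely_clean_of_unique_idempotent => a.
have [e [[[ee _] Ue _] e_uniq]] := usc a.
exists e; split=> // e' ee' Ue'; apply/esym/e_uniq; split=> //.
  by split=> //; apply: sa.
exact/esym/central.
Qed.

Lemma condition5_uniquely_clean :
  condition5 star -> uniquely_clean R /\ strongly_star_clean star.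
Proof.
move=> c5.
have sa : idempotents_selfadjoint.
  move=> g gg; have [e [[ee Ue ge gse Jese] _]] := c5 g.
  have e1B : e = 1 - g by rewrite (comm_idempotent_unit_eq1B gg ee ge Ue) subKr.
  rewrite e1B starB star1 subrBB in gse Jese.
  have gsg : star g * g = g * star g.
    by move: gse; rewrite mulrBr mulrBl mulr1 mul1r => /addrI /oppr_inj.
  exact: (comm_idempotent_jacobson_eq (star_idempotent gg) gg gsg).
have central := idempotents_central_of_selfadjoint sa.
suff ucR : uniquely_clean R by split=> //; apply: strongly_star_clean_of_selfadjoint.
apply: uniquely_clean_of_unique_idempotent => a.
have [e [[ee Ue _ _ _] e_uniq]] := c5 a.
exists e; split=> // e' ee' Ue'; apply/esym/e_uniq.
by rewrite (sa _ ee') subrr; split=> //; [exact/esym/central .. | exact: jacobson0].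
Qed.

Lemma uniquely_clean_strongly_J_star_clean :
  uniquely_clean R /\ strongly_star_clean star -> strongly_J_star_clean star.
Proof.
move=> [ucR ssc]; have central := uniquely_clean_idempotents_central ucR.
have J2 : J (1 + 1).
  have m1m1 : (-1 : R) * -1 = 1 by rewrite mulrNN mulr1.
  have := uniquely_clean_unit_sub1 ucR (unit_involutive m1m1).
  by rewrite -opprD => /jacobsonN; rewrite opprK.
move=> a; have [e [u [aE [ee se] Uu eu]]] := ssc a.
exists (1 - e); split; first exact: projection1B.
  have -> : a - (1 - e) = (u - 1) + e * (1 + 1).
    rewrite aE mulrDr mulr1 opprB [e + u]addrC -!addrA; congr (u + _).
    by rewrite addrA addrC.
  by apply: jacobsonD; [apply: uniquely_clean_unit_sub1 | apply: jacobsonMl].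
exact/esym/central/idempotent1B.
Qed.

Lemma corner0_of_unique_projections :
  (forall p q, projection star p -> projection star q -> J (p - q) -> p = q) ->
  (forall a b, J (a * b - b * a)) ->
  forall e r, projection star e -> e * r * (1 - e) = 0.
Proof.
move=> uniqP commJ e r pe; have ee := pe.1.
have [ex xe _ _] := corner_nilpotent r ee.
set x := e * r * (1 - e) in ex xe *.
have Jx : J x.
  have x_comm : (e * r - r * e) * (1 - e) = x.
    by rewrite mulrBl -(mulrA r) mul_idempotent1B // mulr0 subr0.
  rewrite -ex -x_comm mulrA; apply: jacobsonMr; apply: jacobsonMl; exact: commJ.
have Jy : J (star x) by apply: jacobson_star.
have [w [cw wc]] : is_unit (1 + x * star x).
  by apply: jacobson_unit1D; apply: jacobsonMr.
have [pp exp] := projection_of_corner pe ex xe cw wc.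
set p := (e + star x) * w * (e + x) in pp exp.
have Jw1 : J (w - 1).
  have -> : w - 1 = - (w * (x * star x)).
    by rewrite -wc mulrDr mulr1 opprD addrA subrr add0r.
  by apply: jacobsonN; apply: jacobsonMl; apply: jacobsonMr.
have Jpe : J (p - e).
  rewrite -(subrKA ((e + star x) * (e + x))); apply: jacobsonD.
    have -> : p - (e + star x) * (e + x) = (e + star x) * (w - 1) * (e + x).
      by rewrite mulrBr mulr1 mulrBl.
    by apply: jacobsonMr; apply: jacobsonMl.
  have -> : (e + star x) * (e + x) - e = x + star x * (e + x).
    by rewrite mulrDl mulrDr ee ex -(addrA e x) addrAC subrr add0r.
  by apply: jacobsonD => //; apply: jacobsonMr.
move: exp; rewrite (uniqP _ _ pp pe Jpe) mulrDl ee xe addr0.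
by move/(congr1 (fun z => z - e)); rewrite subrr addrAC subrr add0r.
Qed.

Lemma uniquely_J_star_clean_strongly_J_star_clean :
  uniquely_J_star_clean star -> strongly_J_star_clean star.
Proof.
move=> uJ.
have uniqP p q : projection star p -> projection star q -> J (p - q) -> p = q.
  move=> pp pq Jpq; have [e [_ e_uniq]] := uJ p.
  have Jpp : J (p - p) by rewrite subrr; apply: jacobson0.
  by rewrite -(e_uniq p) ?(e_uniq q).
have boolJ a : J (a * a - a).
  have [e [[[ee _] Jae] _]] := uJ a.
  have -> : a * a - a = (a - e) * a + e * (a - e) - (a - e).
    by rewrite mulrBl mulrBr ee addrA subrK opprB addrA subrK.
  by apply: jacobsonB => //; apply: jacobsonD; [apply: jacobsonMr | apply: jacobsonMl].
have commJ := jacobson_commutator_of_boolean boolJ.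
move=> a; have [e [[pe Jae] _]] := uJ a.
exists e; split=> //; apply/esym/comm_of_corners0.
  exact: corner0_of_unique_projections uniqP commJ e a pe.
by have := corner0_of_unique_projections uniqP commJ a (projection1B pe); rewrite subKr.
Qed.

End Involution.

Theorem theorem3p2 (R : pzRingType) (star : R -> R) (Hstar : is_involution star) :
  [<-> strongly_J_star_clean star;
       uniquely_clean R /\ strongly_star_clean star;
       uniquely_strongly_star_clean star;
       uniquely_J_star_clean star;
       condition5 star].
Proof.
have sJ_usc := strongly_J_star_clean_uniquely_strongly_star_clean Hstar.
have usc_uc := uniquely_strongly_star_clean_uniquely_clean Hstar.
have uc_sJ := uniquely_clean_strongly_J_star_clean Hstar.
have sJ_uJ := strongly_J_star_clean_uniquely_J_star_clean Hstar.
have uJ_sJ := uniquely_J_star_clean_strongly_J_star_clean Hstar.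
have sJ_c5 := strongly_J_star_clean_condition5 Hstar.
have c5_uc := condition5_uniquely_clean Hstar.
tfae=> [/sJ_usc/usc_uc | /uc_sJ/sJ_usc | /usc_uc/uc_sJ/sJ_uJ | /uJ_sJ/sJ_c5 | /c5_uc/uc_sJ] //.
Qed.
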